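(* Let $P:\mathcal{C}^{\mathrm{op}}\to\mathbf{Pos}$ be a slat-doctrine such that every fibre $P(A)$ has finite joins and every reindexing map $P_f$ preserves them. Then every fibre $P^{un}(A)$ of the universal completion has finite joins and every reindexing map $P^{un}_f$ preserves them.
   Context: A slat-doctrine is a functor $P:\mathcal{C}^{\mathrm{op}}\to\mathbf{Pos}$ with $\mathcal{C}$ having finite products; $P_f:P(Y)\to P(X)$ is reindexing along $f:X\to Y$. Universal completion: $P^{un}(A)$ is the poset (reflection of the preorder) of triples $(A,B,\alpha)$ with $\alpha\in P(A\times B)$, where $(A,B,\alpha)\le(A,C,\beta)$ iff there is $g:A\times C\to B$ with $P_{\langle\mathrm{pr}_A,g\rangle}(\alpha)\le\beta$; for $f:A\to C$, $P^{un}_f(C,D,\gamma)=(A,D,P_{f\times 1_D}(\gamma))$. *)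

Set Implicit Arguments.
Unset Strict Implicit.

Record Cat := {
  ob :> Type;
  hom : ob -> ob -> Type;
  idm : forall A, hom A A;
  comp : forall A B C, hom B C -> hom A B -> hom A C;
  comp_id_l : forall A B (f : hom A B), comp (idm B) f = f;
  comp_id_r : forall A B (f : hom A B), comp f (idm A) = f;
  comp_assoc : forall A B C D (f : hom A B) (g : hom B C) (h : hom C D),
      comp h (comp g f) = comp (comp h g) f
}.
Arguments hom {c} _ _.
Arguments idm {c} _.
Arguments comp {c A B C} _ _.

Record FPCat := {
  cat :> Cat;
  term : cat;
  bang : forall A : cat, hom A term;
  bang_uniq : forall (A : cat) (f : hom A term), f = bang A;
  prod : cat -> cat -> cat;
  pr1 : forall A B : cat, hom (prod A B) A;
  pr2 : forall A B : cat, hom (prod A B) B;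
  pair : forall X A B : cat, hom X A -> hom X B -> hom X (prod A B);
  pair_pr1 : forall X A B (f : hom X A) (g : hom X B), comp (pr1 A B) (pair f g) = f;
  pair_pr2 : forall X A B (f : hom X A) (g : hom X B), comp (pr2 A B) (pair f g) = g;
  pair_uniq : forall X A B (f : hom X A) (g : hom X B) (h : hom X (prod A B)),
      comp (pr1 A B) h = f -> comp (pr2 A B) h = g -> h = pair f g
}.
Arguments term {f0} : rename.
Arguments bang {f0} _ : rename.
Arguments prod {f0} _ _ : rename.
Arguments pr1 {f0} _ _ : rename.
Arguments pr2 {f0} _ _ : rename.
Arguments pair {f0 X A B} _ _ : rename.

(** A slat-doctrine: a functor P : C^op -> Pos, C with finite products.
    [reix f] is the reindexing map P_f : P(Y) -> P(X) for f : X -> Y. *)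
Record Doctrine (C : FPCat) := {
  fib : C -> Type;
  le : forall A, fib A -> fib A -> Prop;
  le_refl : forall A (a : fib A), le a a;
  le_trans : forall A (a b c : fib A), le a b -> le b c -> le a c;
  le_antisym : forall A (a b : fib A), le a b -> le b a -> a = b;
  reix : forall (X Y : C), hom X Y -> fib Y -> fib X;
  reix_mono : forall X Y (f : hom X Y) (a b : fib Y), le a b -> le (reix f a) (reix f b);
  reix_id : forall A (a : fib A), reix (idm A) a = a;
  reix_comp : forall X Y Z (f : hom X Y) (g : hom Y Z) (a : fib Z),
      reix (comp g f) a = reix f (reix g a)
}.
Arguments fib {C} _ _.
Arguments le {C} _ {A} _ _.
Arguments reix {C} _ {X Y} _ _.

(** Finite joins (bottom + binary joins), stated for a preorder [le];
    for a poset this is the usual notion, and for a preorder it is exactly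
    the notion of finite joins in its poset reflection. *)
Definition is_bot {T} (le : T -> T -> Prop) (b : T) := forall x, le b x.
Definition is_join {T} (le : T -> T -> Prop) (x y z : T) :=
  le x z /\ le y z /\ forall w, le x w -> le y w -> le z w.
Definition has_finite_joins {T} (le : T -> T -> Prop) :=
  (exists b, is_bot le b) /\ (forall x y, exists z, is_join le x y z).
Definition preserves_finite_joins {T U} (leT : T -> T -> Prop)
  (leU : U -> U -> Prop) (f : T -> U) :=
  (forall b, is_bot leT b -> is_bot leU (f b)) /\
  (forall x y z, is_join leT x y z -> is_join leU (f x) (f y) (f z)).

Definition doctrine_finite_joins {C : FPCat} (P : Doctrine C) :=
  (forall A : C, has_finite_joins (@le C P A)) /\
  (forall (X Y : C) (f : hom X Y),
      preserves_finite_joins (@le C P Y) (@le C P X) (reix P f)).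

(** Universal completion. Elements of P^un(A) are triples (A, B, alpha) with
    alpha in P(A x B); we keep the preorder and do not quotient. *)
Definition un_el {C : FPCat} (P : Doctrine C) (A : C) :=
  { B : C & fib P (prod A B) }.

Definition un_le {C : FPCat} (P : Doctrine C) (A : C) (x y : un_el P A) : Prop :=
  exists g : hom (prod A (projT1 y)) (projT1 x),
    le P (reix P (pair (pr1 A (projT1 y)) g) (projT2 x)) (projT2 y).

Definition prod_map {C : FPCat} {A B : C} (f : hom A B) (D : C)
  : hom (prod A D) (prod B D) :=
  pair (comp f (pr1 A D)) (pr2 A D).

Definition un_reix {C : FPCat} (P : Doctrine C) {A B : C} (f : hom A B)
  (y : un_el P B) : un_el P A :=
  existT _ (projT1 y) (reix P (prod_map f (projT1 y)) (projT2 y)).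

Definition un_finite_joins {C : FPCat} (P : Doctrine C) :=
  (forall A : C, has_finite_joins (@un_le C P A)) /\
  (forall (X Y : C) (f : hom X Y),
      preserves_finite_joins (@un_le C P Y) (@un_le C P X) (@un_reix C P X Y f)).

(* In P^un(A) the bottom is (A, 1, ⊥) and the join of (A, B, α) and (A, D, β)
   is (A, B × D, P_k1(α) ∨ P_k2(β)), where k1 : A × (B × D) → A × B and
   k2 : A × (B × D) → A × D forget one factor: witnesses g1 : A × E → B and
   g2 : A × E → D for an upper bound (A, E, γ) combine into
   ⟨g1, g2⟩ : A × E → B × D, and reindexing along ⟨pr_A, ⟨g1, g2⟩⟩ preserves
   the join in P. Reindexing along f × 1 commutes with k1 and k2, so P^un_f
   sends these chosen joins to chosen joins; since joins in a preorder are
   unique up to equivalence, this is enough for P^un_f to preserve all of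
   them. *)

Lemma preserves_finite_joins_of_witnesses {T U} (leT : T -> T -> Prop)
    (leU : U -> U -> Prop) (f : T -> U) :
  (forall u v w, leU u v -> leU v w -> leU u w) ->
  (forall x y, leT x y -> leU (f x) (f y)) ->
  (exists b, is_bot leT b /\ is_bot leU (f b)) ->
  (forall x y, exists z, is_join leT x y z /\ is_join leU (f x) (f y) (f z)) ->
  preserves_finite_joins leT leU f.
Proof.
  intros leU_trans f_mono [b0 [b0_bot fb0_bot]] joins. split.
  - intros b b_bot u. apply leU_trans with (f b0); [apply f_mono, b_bot | apply fb0_bot].
  - intros x y z [xz [yz z_least]].
    destruct (joins x y) as [z0 [[xz0 [yz0 z0_least]] [fxz0 [fyz0 fz0_least]]]].
    assert (fzz0 : leU (f z) (f z0)) by (apply f_mono, z_least; assumption).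
    split; [|split].
    + apply leU_trans with (f z0); [exact fxz0 | apply f_mono, z0_least; assumption].
    + apply leU_trans with (f z0); [exact fyz0 | apply f_mono, z0_least; assumption].
    + intros w fxw fyw. apply leU_trans with (f z0); [exact fzz0 | apply fz0_least; assumption].
Qed.

Section Products.
Context {C : FPCat}.

Lemma pair_comp (X Y A B : C) (f : hom Y A) (g : hom Y B) (h : hom X Y) :
  comp (pair f g) h = pair (comp f h) (comp g h).
Proof.
  apply pair_uniq; rewrite comp_assoc; [rewrite pair_pr1 | rewrite pair_pr2]; reflexivity.
Qed.

Lemma pr1_pair_comp (X Y A B : C) (f : hom Y A) (g : hom Y B) (h : hom X Y) :
  comp (pr1 A B) (comp (pair f g) h) = comp f h.
Proof. rewrite comp_assoc, pair_pr1; reflexivity. Qed.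

Lemma pr2_pair_comp (X Y A B : C) (f : hom Y A) (g : hom Y B) (h : hom X Y) :
  comp (pr2 A B) (comp (pair f g) h) = comp g h.
Proof. rewrite comp_assoc, pair_pr2; reflexivity. Qed.

Definition pr_first (A B D : C) : hom (prod A (prod B D)) (prod A B) :=
  pair (pr1 A (prod B D)) (comp (pr1 B D) (pr2 A (prod B D))).

Definition pr_second (A B D : C) : hom (prod A (prod B D)) (prod A D) :=
  pair (pr1 A (prod B D)) (comp (pr2 B D) (pr2 A (prod B D))).

End Products.

Ltac fp_simpl :=
  unfold prod_map, pr_first, pr_second;
  repeat progress rewrite <- ?comp_assoc, ?pair_comp, ?pair_pr1, ?pair_pr2,
    ?pr1_pair_comp, ?pr2_pair_comp, ?comp_id_l, ?comp_id_r.

Section UniversalCompletion.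
Context {C : FPCat} {P : Doctrine C}.

Hypothesis reix_bot : forall {X Y : C} (f : hom X Y) {b : fib P Y},
  is_bot (le P) b -> is_bot (le P) (reix P f b).
Hypothesis reix_join : forall {X Y : C} (f : hom X Y) {x y z : fib P Y},
  is_join (le P) x y z -> is_join (le P) (reix P f x) (reix P f y) (reix P f z).

Lemma un_le_trans (A : C) (x y z : un_el P A) : un_le x y -> un_le y z -> un_le x z.
Proof.
  destruct x as [B a], y as [D b], z as [E c]; simpl.
  intros [g ab] [h bc]. exists (comp g (pair (pr1 A E) h)); simpl in *.
  apply le_trans with (reix P (pair (pr1 A E) h) b); [|exact bc].
  assert (e : pair (pr1 A E) (comp g (pair (pr1 A E) h))
              = comp (pair (pr1 A D) g) (pair (pr1 A E) h)) by (fp_simpl; reflexivity).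
  rewrite e, reix_comp. apply reix_mono, ab.
Qed.

Lemma un_reix_mono (X Y : C) (f : hom X Y) (x y : un_el P Y) :
  un_le x y -> un_le (un_reix f x) (un_reix f y).
Proof.
  destruct x as [B a], y as [D b]; simpl. intros [g ab].
  exists (comp g (prod_map f D)); simpl in *.
  assert (e : comp (prod_map f B) (pair (pr1 X D) (comp g (prod_map f D)))
              = comp (pair (pr1 Y D) g) (prod_map f D)) by (fp_simpl; reflexivity).
  rewrite <- reix_comp, e, reix_comp. apply reix_mono, ab.
Qed.

Lemma un_is_bot (A : C) (b : fib P (prod A term)) :
  is_bot (le P) b -> is_bot (@un_le C P A) (existT _ term b).
Proof.
  intros b_bot [D d]. exists (bang (prod A D)). apply reix_bot, b_bot.
Qed.

Lemma un_is_join (A B D : C) (a : fib P (prod A B)) (b : fib P (prod A D)) j :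
  is_join (le P) (reix P (pr_first A B D) a) (reix P (pr_second A B D) b) j ->
  is_join (@un_le C P A) (existT _ B a) (existT _ D b) (existT _ (prod B D) j).
Proof.
  intros j_join. pose proof j_join as [aj [bj _]]. split; [|split].
  - exists (comp (pr1 B D) (pr2 A (prod B D))). exact aj.
  - exists (comp (pr2 B D) (pr2 A (prod B D))). exact bj.
  - intros [E c] [g1 ac] [g2 bc]; simpl in *. exists (pair g1 g2).
    destruct (reix_join (pair (pr1 A E) (pair g1 g2)) j_join)
      as [_ [_ reix_least]].
    apply reix_least; rewrite <- reix_comp.
    + assert (e : comp (pr_first A B D) (pair (pr1 A E) (pair g1 g2)) = pair (pr1 A E) g1)
        by (fp_simpl; reflexivity).
      rewrite e. exact ac.
    + assert (e : comp (pr_second A B D) (pair (pr1 A E) (pair g1 g2)) = pair (pr1 A E) g2)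
        by (fp_simpl; reflexivity).
      rewrite e. exact bc.
Qed.

Lemma un_reix_is_join (X Y B D : C) (f : hom X Y)
    (a : fib P (prod Y B)) (b : fib P (prod Y D)) j :
  is_join (le P) (reix P (pr_first Y B D) a) (reix P (pr_second Y B D) b) j ->
  is_join (@un_le C P X) (un_reix f (existT _ B a)) (un_reix f (existT _ D b))
    (un_reix f (existT _ (prod B D) j)).
Proof.
  intros j_join. apply un_is_join; cbn [projT1 projT2].
  assert (e1 : comp (pr_first Y B D) (prod_map f (prod B D))
               = comp (prod_map f B) (pr_first X B D)) by (fp_simpl; reflexivity).
  assert (e2 : comp (pr_second Y B D) (prod_map f (prod B D))
               = comp (prod_map f D) (pr_second X B D)) by (fp_simpl; reflexivity).
  rewrite <- !reix_comp, <- e1, <- e2, !reix_comp. apply reix_join, j_join.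
Qed.

Hypothesis fib_bot : forall A : C, exists b : fib P A, is_bot (le P) b.
Hypothesis fib_join : forall {A : C} (x y : fib P A), exists z, is_join (le P) x y z.

Lemma un_stable_bot_exists (A : C) :
  exists b : un_el P A, is_bot (@un_le C P A) b /\
    forall (X : C) (f : hom X A), is_bot (@un_le C P X) (un_reix f b).
Proof.
  destruct (fib_bot (prod A term)) as [b b_bot]. exists (existT _ term b). split.
  - apply un_is_bot, b_bot.
  - intros X f. apply un_is_bot, reix_bot, b_bot.
Qed.

Lemma un_stable_join_exists (A : C) (x y : un_el P A) :
  exists z : un_el P A, is_join (@un_le C P A) x y z /\
    forall (X : C) (f : hom X A),
      is_join (@un_le C P X) (un_reix f x) (un_reix f y) (un_reix f z).
Proof.
  destruct x as [B a], y as [D b].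
  destruct (fib_join (reix P (pr_first A B D) a) (reix P (pr_second A B D) b))
    as [j j_join].
  exists (existT _ (prod B D) j). split.
  - apply un_is_join, j_join.
  - intros X f. apply un_reix_is_join, j_join.
Qed.

End UniversalCompletion.

Theorem proposition3 (C : FPCat) (P : Doctrine C) :
  doctrine_finite_joins P -> un_finite_joins P.
Proof.
  intros [fib_joins reix_joins].
  pose proof (fun A => proj1 (fib_joins A)) as fib_bot.
  pose proof (fun A => proj2 (fib_joins A)) as fib_join.
  pose proof (fun X Y f => proj1 (reix_joins X Y f)) as reix_bot.
  pose proof (fun X Y f => proj2 (reix_joins X Y f)) as reix_join.
  split.
  - intros A. split.
    + destruct (un_stable_bot_exists reix_bot fib_bot A) as [b [b_bot _]]. eauto.
    + intros x y.
      destruct (un_stable_join_exists reix_join fib_join _ x y) as [z [z_join _]]. eauto.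
  - intros X Y f. apply preserves_finite_joins_of_witnesses.
    + apply un_le_trans.
    + apply un_reix_mono.
    + destruct (un_stable_bot_exists reix_bot fib_bot Y) as [b [b_bot fb_bot]]. eauto.
    + intros x y.
      destruct (un_stable_join_exists reix_join fib_join _ x y) as [z [z_join fz_join]]. eauto.
Qed.
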